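(* Let $R$ be an (irreducible) ADE lattice of rank $n\ge 9$. Then $U\oplus R$ contains a sublattice isometric to $U\oplus E_8$.
   Context: Lattices are even, integral, non-degenerate. $U$ denotes the even unimodular hyperbolic lattice of rank 2 (Gram matrix $\begin{pmatrix}0&1\\1&0\end{pmatrix}$). ADE lattices $A_n$ ($n\ge1$), $D_n$ ($n\ge4$), $E_6,E_7,E_8$ are the negative definite root lattices whose Gram matrix, in the standard basis of roots $r_1,\dots,r_n$, is $-1$ times the Cartan matrix of the corresponding Dynkin diagram (so $r_i^2=-2$, $r_i.r_j=1$ if $i\ne j$ are adjacent, $0$ otherwise). *)

(* Even lattices are encoded by integer Gram matrices. *)
From mathcomp Require Import all_boot all_order all_algebra.
Set Implicit Arguments. Unset Strict Implicit. Unset Printing Implicit Defensive.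
Import GRing.Theory Num.Theory.
Local Open Scope ring_scope.

Inductive ADE_type := A_ of nat | D_ of nat | E6 | E7 | E8.

Definition ADE_rank (t : ADE_type) : nat :=
  match t with A_ n => n | D_ n => n | E6 => 6 | E7 => 7 | E8 => 8 end.

Definition ADE_valid (t : ADE_type) : bool :=
  match t with A_ n => (1 <= n)%N | D_ n => (4 <= n)%N | _ => true end.

Definition path_adj (m i j : nat) : bool :=
  [&& (i < m)%N, (j < m)%N & ((i.+1 == j) || (j.+1 == i))].

(* Adjacency of the Dynkin diagram, nodes 0 .. rank-1:
   A_n : path 0-1-...-(n-1);
   D_n : path 0-...-(n-2), plus node n-1 attached to node n-3;
   E_n : path 0-...-(n-2), plus node n-1 attached to node 2. *)
Definition ADE_adj (t : ADE_type) (i j : nat) : bool :=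
  match t with
  | A_ n => path_adj n i j
  | D_ n => path_adj n.-1 i j ||
            ((i == n.-1) && (j == n - 3)%N) || ((j == n.-1) && (i == n - 3)%N)
  | E6 => path_adj 5 i j || ((i == 5%N) && (j == 2%N)) || ((j == 5%N) && (i == 2%N))
  | E7 => path_adj 6 i j || ((i == 6%N) && (j == 2%N)) || ((j == 6%N) && (i == 2%N))
  | E8 => path_adj 7 i j || ((i == 7%N) && (j == 2%N)) || ((j == 7%N) && (i == 2%N))
  end.

(* Gram matrix = - Cartan matrix (negative definite). *)
Definition ADE_gram (t : ADE_type) : 'M[int]_(ADE_rank t) :=
  \matrix_(i, j) (if i == j then (-2)%R
                  else if ADE_adj t i j then 1%R else 0%R).

Definition U_gram : 'M[int]_2 :=
  \matrix_(i, j) (if i == j then 0%R else 1%R).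

Definition osum (m n : nat) (A : 'M[int]_m) (B : 'M[int]_n) : 'M[int]_(m + n) :=
  block_mx A 0 0 B.

(* The lattice with Gram matrix G contains a sublattice isometric to the lattice
   with Gram matrix H: there are k vectors (rows of X, in coordinates of the
   basis of the first lattice) whose Gram matrix is H and which are linearly
   independent (so they form a basis of a sublattice isometric to H). *)
Definition contains_isometric (n k : nat) (G : 'M[int]_n) (H : 'M[int]_k) : Prop :=
  exists X : 'M[int]_(k, n),
    X *m G *m X^T = H /\ row_free (map_mx (fun z : int => z%:~R : rat) X).

(* The first seven simple roots of A_9 (or D_9) form the long path of the E_8
   diagram; the branch root of E_8 and a hyperbolic pair can then be chosen as
   integer combinations of U and the roots, giving explicit Gram-preserving
   witnesses for U + E_8 in U + A_9 and in U + D_9, checked by computation.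
   Since U + E_8 is unimodular, such vectors are automatically independent.
   For n >= 9 the first nine nodes of A_n, and for n >= 10 those of D_n, span
   an A_9 subdiagram, so U + A_9 sits in U + R on a subset of the basis. *)
From mathcomp Require Import all_boot all_order all_algebra zify.
Import GRing.Theory.
Local Open Scope ring_scope.

Section Sublattices.

Local Notation ratmx := (map_mx (fun z : int => z%:~R : rat)).

Lemma row_free_gram_unit k n (X : 'M[int]_(k, n)) (G : 'M[int]_n) :
  ratmx (X *m G *m X^T) \in unitmx -> row_free (ratmx X).
Proof.
move=> /mxrank_unit rk_gram; rewrite /row_free eqn_leq rank_leq_row /=.
by rewrite -[X in (X <= _)%N]rk_gram !map_mxM -mulmxA mxrankM_maxl.
Qed.

Lemma contains_isometric_unimodular k n (G : 'M[int]_n) (H K : 'M[int]_k)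
    (X : 'M[int]_(k, n)) :
  X *m G *m X^T = H -> H *m K = 1%:M -> contains_isometric G H.
Proof.
move=> gramX HK; exists X; split => //; apply: (@row_free_gram_unit _ _ _ G).
rewrite gramX; have [] // := @mulmx1_unit _ _ (ratmx H) (ratmx K).
by rewrite -map_mxM HK map_mx1.
Qed.

(* The sublattice spanned by some of the basis vectors has Gram matrix
   [mxsub f f G]; its vectors are the rows of [rowsub f 1%:M]. *)
Lemma contains_isometric_mxsub k m n (f : 'I_m -> 'I_n) (G : 'M[int]_n)
    (H : 'M[int]_k) :
  injective f -> contains_isometric (mxsub f f G) H -> contains_isometric G H.
Proof.
move=> inj_f [X [gramX freeX]].
pose E : 'M[int]_(m, n) := rowsub f 1%:M.
have gramE : E *m G *m E^T = mxsub f f G.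
  by apply/matrixP => i j; rewrite trmx_mxsub trmx1 mulmx_colsub mulmx1
    -rowsubE !mxE.
have EEt : E *m E^T = 1%:M.
  by apply/matrixP => i j; rewrite trmx_mxsub trmx1 mulmx_colsub mulmx1 !mxE
    (inj_eq inj_f).
exists (X *m E); split.
  by rewrite trmx_mul -!mulmxA [E *m _]mulmxA [E *m G *m _]mulmxA gramE !mulmxA.
rewrite /row_free map_mxM mxrankMfree //; apply/row_freeP.
by exists (ratmx E^T); rewrite -map_mxM EEt map_mx1.
Qed.

Lemma contains_isometric_lead k m n (le_mn : (m <= n)%N) (G : 'M[int]_n)
    (H : 'M[int]_k) :
  contains_isometric (mxsub (widen_ord le_mn) (widen_ord le_mn) G) H ->
  contains_isometric G H.
Proof. by apply: contains_isometric_mxsub => i j /(congr1 val) /= /val_inj. Qed.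

End Sublattices.

Definition mxfun m n (f : nat -> nat -> int) : 'M[int]_(m, n) :=
  \matrix_(i, j) f i j.

Definition nsum n (F : nat -> int) : int :=
  foldr (fun j s => F j + s) 0 (iota 0 n).

Definition eq_on_box m n (f g : nat -> nat -> int) : bool :=
  all (fun i => all (fun j => f i j == g i j) (iota 0 n)) (iota 0 m).

Lemma nsumE n F : nsum n F = \sum_(j < n) F j.
Proof. by rewrite -(big_mkord xpredT F) /index_iota subn0 unlock. Qed.

Lemma mxfun_mul m n p f g :
  mxfun m n f *m mxfun n p g =
  mxfun m p (fun i k => nsum n (fun j => f i j * g j k)).
Proof.
by apply/matrixP => i k; rewrite !mxE nsumE; apply: eq_bigr => j _; rewrite !mxE.
Qed.

Lemma trmx_mxfun m n f : (mxfun m n f)^T = mxfun n m (fun i j => f j i).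
Proof. by apply/matrixP => i j; rewrite !mxE. Qed.

Lemma scalar1_mxfun n : 1%:M = mxfun n n (fun i j => (i == j)%:R).
Proof. by apply/matrixP => i j; rewrite !mxE. Qed.

Lemma mxsub_widen_mxfun m n (le_mn : (m <= n)%N) f :
  mxsub (widen_ord le_mn) (widen_ord le_mn) (mxfun n n f) = mxfun m m f.
Proof. by apply/matrixP => i j; rewrite !mxE. Qed.

Lemma eq_mxfun m n f g : eq_on_box m n f g -> mxfun m n f = mxfun m n g.
Proof.
move=> /allP box; apply/matrixP => i j; rewrite !mxE.
have /allP row_i : all (fun j => f i j == g i j) (iota 0 n).
  by apply: box; rewrite mem_iota ltn_ord.
by apply/eqP/row_i; rewrite mem_iota ltn_ord.
Qed.

Definition U_ADE_gram_fun (t : ADE_type) (i j : nat) : int :=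
  if (i < 2)%N && (j < 2)%N then (if i == j then 0 else 1)
  else if (2 <= i)%N && (2 <= j)%N then
    (if i == j then -2 else if ADE_adj t (i - 2) (j - 2) then 1 else 0)
  else 0.

Lemma osum_U_ADE_gramE t :
  osum U_gram (ADE_gram t) = mxfun _ _ (U_ADE_gram_fun t).
Proof.
apply/matrixP => i j; rewrite /osum /U_ADE_gram_fun [RHS]mxE.
rewrite -[i]splitK -[j]splitK.
case: (split i) => i'; case: (split j) => j' /=;
  rewrite ?block_mxEul ?block_mxEur ?block_mxEdl ?block_mxEdr !mxE /=.
- by rewrite !ltn_ord.
- rewrite ltn_ord /=; have := ltn_ord i'; do 2?case: ifP => //; lia.
- have := ltn_ord j'; do 2?case: ifP => //; lia.
- by rewrite eqn_add2l !addKn.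
Qed.

Lemma path_adj_lead k n i j : (k <= n)%N -> (i < k)%N -> (j < k)%N ->
  path_adj n i j = path_adj k i j.
Proof. by move=> le_kn ik jk; rewrite /path_adj ik jk !(leq_trans _ le_kn). Qed.

Lemma ADE_adj_D_lead k n i j : (k < n)%N -> (i < k)%N -> (j < k)%N ->
  ADE_adj (D_ n) i j = ADE_adj (A_ k) i j.
Proof.
move=> lt_kn ik jk /=; rewrite (@path_adj_lead k) //; last by lia.
by rewrite !(@ltn_eqF _ n.-1) ?orbF //; lia.
Qed.

Lemma U_ADE_gram_fun_lead t t0 a c :
  (forall i j, (i < ADE_rank t0)%N -> (j < ADE_rank t0)%N ->
     ADE_adj t i j = ADE_adj t0 i j) ->
  (a < 2 + ADE_rank t0)%N -> (c < 2 + ADE_rank t0)%N ->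
  U_ADE_gram_fun t a c = U_ADE_gram_fun t0 a c.
Proof.
move=> adj_lead a_lt c_lt; rewrite /U_ADE_gram_fun.
by case: ifP => // _; case: ifP => // /andP[a_ge c_ge]; rewrite adj_lead //; lia.
Qed.

Lemma contains_isometric_U_ADE_lead k t t0 (H : 'M[int]_k) :
  (ADE_rank t0 <= ADE_rank t)%N ->
  (forall i j, (i < ADE_rank t0)%N -> (j < ADE_rank t0)%N ->
     ADE_adj t i j = ADE_adj t0 i j) ->
  contains_isometric (osum U_gram (ADE_gram t0)) H ->
  contains_isometric (osum U_gram (ADE_gram t)) H.
Proof.
move=> le_rank adj_lead; rewrite !osum_U_ADE_gramE => sub0.
have le2 : (2 + ADE_rank t0 <= 2 + ADE_rank t)%N by rewrite leq_add2l.
apply: (@contains_isometric_lead _ _ _ le2); rewrite mxsub_widen_mxfun.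
set m := (2 + ADE_rank t0)%N in sub0 *.
suff -> : mxfun m m (U_ADE_gram_fun t) = mxfun m m (U_ADE_gram_fun t0) by [].
by apply/matrixP => a c; rewrite !mxE; apply: U_ADE_gram_fun_lead.
Qed.

Definition seq_mx m n (s : seq (seq int)) : 'M[int]_(m, n) :=
  mxfun m n (fun i j => nth 0 (nth [::] s i) j).

(* Coordinates: the hyperbolic pair of U, then the simple roots of R. *)
Definition U_E8_in_U_A9 : seq (seq int) :=
  [:: [:: -3; -27; -2; -4; -6; -8; -10; -12; -14; -16; -9];
      [:: -3; -28; -2; -4; -6; -8; -10; -12; -14; -16; -10];
      [:: 0; 0; 1; 0; 0; 0; 0; 0; 0; 0; 0];
      [:: 0; 0; 0; 1; 0; 0; 0; 0; 0; 0; 0];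
      [:: 0; 0; 0; 0; 1; 0; 0; 0; 0; 0; 0];
      [:: 0; 0; 0; 0; 0; 1; 0; 0; 0; 0; 0];
      [:: 0; 0; 0; 0; 0; 0; 1; 0; 0; 0; 0];
      [:: 0; 0; 0; 0; 0; 0; 0; 1; 0; 0; 0];
      [:: 0; 0; 0; 0; 0; 0; 0; 0; 1; 0; 0];
      [:: 1; 8; 0; 0; 0; 1; 2; 3; 4; 5; 3]].

Definition U_E8_in_U_D9 : seq (seq int) :=
  [:: [:: -2; -3; -1; -2; -3; -4; -5; -6; -7; -3; -5];
      [:: -3; -6; -2; -4; -6; -8; -10; -12; -14; -7; -9];
      [:: 0; 0; 1; 0; 0; 0; 0; 0; 0; 0; 0];
      [:: 0; 0; 0; 1; 0; 0; 0; 0; 0; 0; 0];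
      [:: 0; 0; 0; 0; 1; 0; 0; 0; 0; 0; 0];
      [:: 0; 0; 0; 0; 0; 1; 0; 0; 0; 0; 0];
      [:: 0; 0; 0; 0; 0; 0; 1; 0; 0; 0; 0];
      [:: 0; 0; 0; 0; 0; 0; 0; 1; 0; 0; 0];
      [:: 0; 0; 0; 0; 0; 0; 0; 0; 1; 0; 0];
      [:: 1; 2; 0; 0; 0; 1; 2; 3; 4; 2; 3]].

Definition U_E8_gram_inv : seq (seq int) :=
  [:: [:: 0; 1; 0; 0; 0; 0; 0; 0; 0; 0];
      [:: 1; 0; 0; 0; 0; 0; 0; 0; 0; 0];
      [:: 0; 0; -4; -7; -10; -8; -6; -4; -2; -5];
      [:: 0; 0; -7; -14; -20; -16; -12; -8; -4; -10];
      [:: 0; 0; -10; -20; -30; -24; -18; -12; -6; -15];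
      [:: 0; 0; -8; -16; -24; -20; -15; -10; -5; -12];
      [:: 0; 0; -6; -12; -18; -15; -12; -8; -4; -9];
      [:: 0; 0; -4; -8; -12; -10; -8; -6; -3; -6];
      [:: 0; 0; -2; -4; -6; -5; -4; -3; -2; -3];
      [:: 0; 0; -5; -10; -15; -12; -9; -6; -3; -8]].

Lemma U_E8_gram_invP :
  osum U_gram (ADE_gram E8) *m seq_mx 10 10 U_E8_gram_inv = 1%:M.
Proof.
by rewrite osum_U_ADE_gramE mxfun_mul scalar1_mxfun; apply: eq_mxfun; vm_compute.
Qed.

Lemma U_A9_contains_U_E8 :
  contains_isometric (osum U_gram (ADE_gram (A_ 9))) (osum U_gram (ADE_gram E8)).
Proof.
apply: (@contains_isometric_unimodular _ _ _ _ _ (seq_mx 10 11 U_E8_in_U_A9) _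
  U_E8_gram_invP).
rewrite !osum_U_ADE_gramE trmx_mxfun !mxfun_mul.
by apply: eq_mxfun; vm_compute.
Qed.

Lemma U_D9_contains_U_E8 :
  contains_isometric (osum U_gram (ADE_gram (D_ 9))) (osum U_gram (ADE_gram E8)).
Proof.
apply: (@contains_isometric_unimodular _ _ _ _ _ (seq_mx 10 11 U_E8_in_U_D9) _
  U_E8_gram_invP).
rewrite !osum_U_ADE_gramE trmx_mxfun !mxfun_mul.
by apply: eq_mxfun; vm_compute.
Qed.

Theorem proposition2p1 (R : ADE_type) :
  ADE_valid R -> (9 <= ADE_rank R)%N ->
  contains_isometric (osum U_gram (ADE_gram R)) (osum U_gram (ADE_gram E8)).
Proof.
case: R => [n|n|||] //= _ le9n.
- apply: (@contains_isometric_U_ADE_lead _ (A_ n) (A_ 9)) U_A9_contains_U_E8 => //.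
  by move=> i j; apply: path_adj_lead.
- have [lt9n | le_n9] := ltnP 9 n; last first.
    have -> : n = 9%N by lia.
    exact: U_D9_contains_U_E8.
  apply: (@contains_isometric_U_ADE_lead _ (D_ n) (A_ 9)) U_A9_contains_U_E8 => //.
  by move=> i j; apply: ADE_adj_D_lead.
Qed.
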